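(* For every $n\equiv 5 \pmod{16}$ with $n\geq 21$, there exists an almost 2-perfect maximum 8-cycle packing of $K_n$.
   Context: An 8-cycle packing of $K_n$ on vertex set $\mathcal{X}$ is a triple $(\mathcal{X},\mathcal{C},\mathcal{L})$ with $\mathcal{C}$ a collection of pairwise edge-disjoint 8-cycles of $K_n$ and leave $\mathcal{L}$ the set of edges in no cycle of $\mathcal{C}$; it is maximum if $|\mathcal{L}|$ is minimum among all 8-cycle packings of $K_n$. For an 8-cycle $C$, an inside 8-cycle of $C$ is an 8-cycle on the same vertex set sharing no edge with $C$. The packing is almost 2-perfect if one can choose for each $C\in\mathcal{C}$ an inside 8-cycle $C'$ such that $(\mathcal{X},\{C'\},\mathcal{L})$ is again an 8-cycle packing with the same leave. *)

From mathcomp Require Import all_boot.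
Set Implicit Arguments. Unset Strict Implicit. Unset Printing Implicit Defensive.

Definition Kedges (n : nat) : {set {set 'I_n}} := [set e : {set 'I_n} | #|e| == 2].

Definition succ8 (i : 'I_8) : 'I_8 := inord ((i.+1) %% 8).

Definition cycle_edges n (t : 8.-tuple 'I_n) : {set {set 'I_n}} :=
  [set [set tnth t i; tnth t (succ8 i)] | i : 'I_8].

Definition is_8cycle n (C : {set {set 'I_n}}) : Prop :=
  exists t : 8.-tuple 'I_n, uniq t /\ C = cycle_edges t.

Definition vset n (C : {set {set 'I_n}}) : {set 'I_n} := \bigcup_(e in C) e.

Definition is_packing n (P : {set {set {set 'I_n}}}) : Prop :=
  (forall C, C \in P -> is_8cycle C) /\
  (forall C D, C \in P -> D \in P -> C != D -> [disjoint C & D]).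

Definition leave n (P : {set {set {set 'I_n}}}) : {set {set 'I_n}} :=
  Kedges n :\: \bigcup_(C in P) C.

Definition is_maximum n (P : {set {set {set 'I_n}}}) : Prop :=
  is_packing P /\
  forall P' : {set {set {set 'I_n}}}, is_packing P' -> #|leave P| <= #|leave P'|.

Definition inside_8cycle n (C C' : {set {set 'I_n}}) : Prop :=
  is_8cycle C' /\ vset C' = vset C /\ [disjoint C' & C].

Definition almost_2perfect n (P : {set {set {set 'I_n}}}) : Prop :=
  exists f : {set {set 'I_n}} -> {set {set 'I_n}},
    (forall C, C \in P -> inside_8cycle C (f C)) /\
    (forall C D, C \in P -> D \in P -> C != D -> [disjoint f C & f D]) /\
    leave [set f C | C in P] = leave P.

(* Every vertex has even degree in an 8-cycle, hence, for odd n, in the leave of any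
   8-cycle packing of K_n.  As C(n,2) = 2 (mod 8), the leave has 2 (mod 8) edges, and two
   edges cannot give every vertex even degree: every leave has at least 10 edges.

   For n = 16k + 5 a packing with leave K_5 is built on the vertices 0..16k+4.  Vertex 0
   and the vertices 1..20 carry a decomposition of K_21 - K_5, vertex 0 and each further
   block of 16 consecutive vertices a decomposition of K_17, and the complete bipartite
   graph K_{4,4} between two groups of four consecutive vertices lying in different blocks
   splits into two 8-cycles, each an inside cycle of the other.  The decompositions of
   K_21 - K_5 and K_17, with an inside cycle for each of their cycles, are finite tables
   checked by computation. *)

From HB Require Import structures.
From mathcomp Require Import all_boot zify.
Set Implicit Arguments. Unset Strict Implicit. Unset Printing Implicit Defensive.

Lemma succ8_val (i : 'I_8) : succ8 i = i.+1 %% 8 :> nat.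
Proof. by rewrite /succ8 inordK // ltn_pmod. Qed.

Lemma set2_eq (T : finType) (a b c d : T) :
  [set a; b] = [set c; d] -> (a = c /\ b = d) \/ (a = d /\ b = c).
Proof.
move=> E; have := set21 a b; have := set22 a b; have := set21 c d; have := set22 c d.
rewrite E -{1 2}E !in_set2.
by do 4 case/orP=> /eqP ?; subst; auto.
Qed.

(** * Vertex degrees and a lower bound on the leave *)

Definition edges_at n (v : 'I_n) (A : {set {set 'I_n}}) := [set e in A | v \in e].

Section CycleEdges.

Variables (n : nat) (t : 8.-tuple 'I_n).
Hypothesis t_uniq : uniq t.

Let tinj : injective (tnth t) := tuple_uniqP _ t_uniq.

Lemma cycle_step_neq (i : 'I_8) : tnth t i != tnth t (succ8 i).
Proof. by rewrite (inj_eq tinj) -(inj_eq val_inj) /= succ8_val; apply/eqP; lia. Qed.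

Lemma cycle_step_inj : injective (fun i => [set tnth t i; tnth t (succ8 i)]).
Proof.
move=> i j /set2_eq [[/tinj -> //]|[/tinj Ei /tinj Ej]].
by move: Ei Ej => /(congr1 (@nat_of_ord 8)) + /(congr1 (@nat_of_ord 8)); rewrite !succ8_val; lia.
Qed.

Lemma card_cycle_edges : #|cycle_edges t| = 8.
Proof. by rewrite card_imset ?card_ord //; apply: cycle_step_inj. Qed.

Lemma cycle_edges_sub : cycle_edges t \subset Kedges n.
Proof.
by apply/subsetP => _ /imsetP [i _ ->]; rewrite inE cards2 cycle_step_neq.
Qed.

(* Each vertex is met once as [tnth t i] and once as [tnth t (succ8 i)]. *)
Lemma card_edges_at_cycle v :
  #|edges_at v (cycle_edges t)| = (\sum_(i < 8) (tnth t i == v)).*2.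
Proof.
rewrite -sum1dep_card big_mkcondr /= big_imset /=; last by move=> i j _ _; apply: cycle_step_inj.
have succ8_inj : injective succ8.
  move=> i j /(congr1 (@nat_of_ord 8)); rewrite !succ8_val => E; apply: val_inj.
  by have := ltn_ord i; have := ltn_ord j; rewrite /=; lia.
rewrite -addnn [X in _ = _ + X](reindex_inj succ8_inj) -big_split /=.
apply: eq_bigr => i _; rewrite in_set2.
have := cycle_step_neq i; rewrite !(eq_sym v).
by case: (tnth t i =P v) => [->|_]; case: (tnth t (succ8 i) =P v) => [->|_]; rewrite ?eqxx.
Qed.

End CycleEdges.

Lemma vset_cycle_edges n (t : 8.-tuple 'I_n) : vset (cycle_edges t) = [set x in t].
Proof.
apply/setP => x; rewrite inE; apply/bigcupP/tnthP => [[_ /imsetP [i _ ->]]|[i ->]].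
  by rewrite in_set2 => /orP [] /eqP ->; [exists i | exists (succ8 i)].
by exists [set tnth t i; tnth t (succ8 i)]; [apply: imset_f | rewrite set21].
Qed.

Lemma even_edges_at_8cycle n (C : {set {set 'I_n}}) v :
  is_8cycle C -> ~~ odd #|edges_at v C|.
Proof. by case=> t [Ut ->]; rewrite card_edges_at_cycle // odd_double. Qed.

Section LeaveLowerBound.

Variable n : nat.
Implicit Types (P : {set {set {set 'I_n}}}) (A : {set {set 'I_n}}).

Lemma card_edges_at_K v : #|edges_at v (Kedges n)| = n.-1.
Proof.
have -> : edges_at v (Kedges n) = [set [set v; u] | u in [set~ v]].
  apply/setP => e; rewrite !inE; apply/andP/imsetP => [[/cards2P [a [b [nab ->]]]]|[u]].
    rewrite in_set2 => /orP [] /eqP ?; subst v.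
      by exists b; rewrite // !inE eq_sym.
    by exists a; rewrite 1?setUC // !inE.
  by rewrite !inE => nuv ->; rewrite cards2 set21 (eq_sym v) nuv.
rewrite card_imset ?cardsC1 ?card_ord // => u w E.
have : u \in [set v; w] by rewrite -E set22.
have : w \in [set v; u] by rewrite E set22.
by rewrite !in_set2 => /orP [] /eqP -> /orP [] /eqP.
Qed.

Lemma packing_cover_sub P : is_packing P -> cover P \subset Kedges n.
Proof.
case=> cyc _; apply/subsetP => e /bigcupP [C /cyc [t [Ut ->]]].
exact/subsetP/cycle_edges_sub.
Qed.

Lemma packing_trivIset P : is_packing P -> trivIset P.
Proof. by case=> _ dis; apply/trivIsetP. Qed.

Lemma card_leave_packing P : is_packing P -> #|leave P| + 8 * #|P| = 'C(n, 2).
Proof.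
move=> HP; have /eqP := packing_trivIset HP.
have -> : \sum_(C in P) #|C| = 8 * #|P|.
  rewrite mulnC -sum_nat_const; apply: eq_bigr => C /(proj1 HP) [t [Ut ->]].
  exact: card_cycle_edges.
move=> cardP; rewrite /leave cardsD (setIidPr (packing_cover_sub HP)) -/(cover P).
rewrite cardP subnK ?subset_leq_card ?packing_cover_sub //.
by rewrite card_draws card_ord.
Qed.

Lemma card_edges_at_cover P v : trivIset P ->
  #|edges_at v (cover P)| = \sum_(C in P) #|edges_at v C|.
Proof.
move=> triP; rewrite -sum1dep_card (big_trivIset_cond _ triP).
by apply: eq_bigr => C _; rewrite sum1dep_card.
Qed.

Lemma even_edges_at_leave P v : is_packing P -> odd n -> ~~ odd #|edges_at v (leave P)|.
Proof.
move=> HP odd_n.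
have covered : #|edges_at v (leave P)| + #|edges_at v (cover P)| = n.-1.
  rewrite addnC -(card_edges_at_K v) -[RHS](cardsID (cover P)).
  congr (_ + _); apply: eq_card => e; rewrite !inE.
    case: (boolP (e \in cover P)) => [eC|]; rewrite ?andbT ?andbF //=.
    by have := subsetP (packing_cover_sub HP) e eC; rewrite inE => ->.
  by rewrite andbA.
have even_cover : ~~ odd #|edges_at v (cover P)|.
  rewrite card_edges_at_cover ?packing_trivIset //.
  elim/big_ind: _ => // [x y ex ey|C /(proj1 HP)]; first by rewrite oddD (negbTE ex) (negbTE ey).
  exact: even_edges_at_8cycle.
have even_pred : ~~ odd n.-1 by rewrite -oddS prednK ?odd_gt0.
by move: even_pred; rewrite -covered oddD (negbTE even_cover) addbF.
Qed.

Lemma card_even_degree_gt2 A :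
  A \subset Kedges n -> (forall v, ~~ odd #|edges_at v A|) -> A != set0 -> 2 < #|A|.
Proof.
move=> AK even_deg /set0Pn [e eA].
have card_edge f : f \in A -> #|f| = 2 by move=> /(subsetP AK); rewrite inE => /eqP.
have second_edge w : w \in e -> exists2 f, f \in A :\ e & w \in f.
  move=> we; have ew : e \in edges_at w A by rewrite inE eA.
  have : 1 < #|edges_at w A|.
    have := even_deg w; have : 0 < #|edges_at w A| by apply/card_gt0P; exists e.
    by case: #|_| => [|[|]].
  rewrite (cardsD1 e) ew ltnS => /card_gt0P [f]; rewrite !inE => /and3P [fe fA wf].
  by exists f; rewrite // !inE fe.
have /cards2P [a [b [_ Ee]]] : #|e| == 2 by rewrite card_edge.
rewrite ltnNge; apply/negP => A_le2.
have [f fAe af] : exists2 f, f \in A :\ e & a \in f by apply: second_edge; rewrite Ee set21.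
have [f' f'Ae bf'] : exists2 f, f \in A :\ e & b \in f by apply: second_edge; rewrite Ee set22.
have Ef' : f' = f.
  have : #|A :\ e| <= 1 by move: A_le2; rewrite (cardsD1 e) eA.
  by move/card_le1_eqP; apply.
have ef : e \subset f.
  by rewrite Ee; apply/subsetP => w; rewrite in_set2 => /orP [] /eqP -> //; rewrite -Ef'.
have /setD1P [fe fA] := fAe.
by move: fe; rewrite eq_sym eqEcard ef !card_edge.
Qed.

Lemma leave_card_ge10 P : is_packing P -> odd n -> 'C(n, 2) %% 8 = 2 -> 10 <= #|leave P|.
Proof.
move=> HP odd_n binom_mod.
have := card_leave_packing HP; have : 2 < #|leave P|.
  apply: card_even_degree_gt2; first exact: subsetDl.
    by move=> v; apply: even_edges_at_leave.
  by apply/eqP => leave0; have := card_leave_packing HP; rewrite leave0 cards0; lia.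
by move=> ? ?; lia.
Qed.

End LeaveLowerBound.

(** * Packings from certified edge decompositions *)

Definition nxt (i : nat) := i.+1 %% 8.

Lemma nxt_lt i : nxt i < 8.
Proof. exact: ltn_pmod. Qed.

Definition same_edge (x y a b : nat) := ((a == x) && (b == y)) || ((a == y) && (b == x)).

Lemma same_edge_sym x y a b : same_edge x y a b = same_edge a b x y.
Proof. by apply/idP/idP => /orP [] /andP [/eqP -> /eqP ->]; rewrite /same_edge !eqxx ?orbT. Qed.

Definition sym_owner (C : Type) (owner : nat -> nat -> C) (x y : nat) :=
  owner (minn x y) (maxn x y).

Lemma sym_ownerC (C : Type) (owner : nat -> nat -> C) x y :
  sym_owner owner x y = sym_owner owner y x.
Proof. by rewrite /sym_owner minnC maxnC. Qed.

Lemma sym_ownerE (C : Type) (owner : nat -> nat -> C) x y :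
  x <= y -> sym_owner owner x y = owner x y.
Proof. by move=> xy; rewrite /sym_owner (minn_idPl xy) (maxn_idPr xy). Qed.

Lemma sym_owner_same_edge (C : Type) (owner : nat -> nat -> C) x y a b :
  same_edge x y a b -> sym_owner owner a b = sym_owner owner x y.
Proof. by case/orP => /andP [/eqP -> /eqP ->] //; rewrite sym_ownerC. Qed.

Lemma same_edge_inj (f : nat -> nat) x y a b :
  injective f -> same_edge (f x) (f y) (f a) (f b) = same_edge x y a b.
Proof. by move=> f_inj; rewrite /same_edge !(inj_eq f_inj). Qed.

Section EdgeDecomposition.

Variables (m : nat) (C : eqType).

(* Codes [c] in [cycles] name the 8-cycles [vtx c 0, ..., vtx c 7] of K_(m+1) on
   the vertices 0..m; [owner x y] names the cycle through the edge [xy] (x < y),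
   and [L] lists the edges covered by no cycle. *)
Record edge_decomposition (cycles : seq C) (vtx : C -> nat -> nat)
    (owner : nat -> nat -> C) (L : seq (nat * nat)) : Prop := {
  decomp_vtx_le : forall c i, c \in cycles -> i < 8 -> vtx c i <= m;
  decomp_uniq : forall c, c \in cycles -> uniq (mkseq (vtx c) 8);
  decomp_owner : forall c i, c \in cycles -> i < 8 ->
    sym_owner owner (vtx c i) (vtx c (nxt i)) = c;
  decomp_cover : forall x y, x < y <= m -> (x, y) \notin L ->
    owner x y \in cycles /\
    exists2 i, i < 8 & same_edge x y (vtx (owner x y) i) (vtx (owner x y) (nxt i));
  decomp_leave : forall p, p \in L -> p.1 < p.2 <= m /\ owner p.1 p.2 \notin cycles }.

Definition vedge (x y : nat) : {set 'I_m.+1} := [set inord x; inord y].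

Definition cycle_of (vtx : C -> nat -> nat) (c : C) : {set {set 'I_m.+1}} :=
  cycle_edges [tuple inord (vtx c i) | i < 8].

Definition packing_of vtx (cycles : seq C) := [set:: map (cycle_of vtx) cycles].

Definition edge_set (L : seq (nat * nat)) := [set:: map (fun p => vedge p.1 p.2) L].

Lemma inord_le_inj x y : x <= m -> y <= m -> inord x = inord y :> 'I_m.+1 -> x = y.
Proof. by move=> xm ym /(congr1 val); rewrite /= !inordK. Qed.

Lemma vedge_eq x y a b : x <= m -> y <= m -> a <= m -> b <= m ->
  (vedge x y == vedge a b) = same_edge a b x y.
Proof.
move=> xm ym am bm; apply/eqP/idP => [/set2_eq [] [] Ex Ey|].
- by rewrite /same_edge (inord_le_inj xm am Ex) (inord_le_inj ym bm Ey) !eqxx.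
- by rewrite /same_edge (inord_le_inj xm bm Ex) (inord_le_inj ym am Ey) !eqxx orbT.
by case/orP => /andP [/eqP <- /eqP <-] //; rewrite /vedge setUC.
Qed.

Lemma cycle_ofP vtx c e :
  reflect (exists2 i, i < 8 & e = vedge (vtx c i) (vtx c (nxt i))) (e \in cycle_of vtx c).
Proof.
apply: (iffP imsetP) => [[i _ ->]|[i i8 ->]].
  by exists i; rewrite // !tnth_mktuple succ8_val.
by exists (Ordinal i8); rewrite // !tnth_mktuple succ8_val.
Qed.

Lemma cycle_tupleE (vtx : C -> nat -> nat) c :
  [tuple inord (vtx c i) | i < 8] = mkseq (fun i => inord (vtx c i)) 8 :> seq 'I_m.+1.
Proof. by rewrite /mkseq -val_enum_ord -map_comp /= enumT. Qed.

Section Decomposed.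

Variables (cycles : seq C) (vtx : C -> nat -> nat) (owner : nat -> nat -> C).
Variable L : seq (nat * nat).
Hypothesis dec : edge_decomposition cycles vtx owner L.

Lemma decomp_step_neq c i : c \in cycles -> i < 8 -> vtx c i != vtx c (nxt i).
Proof.
move=> cc i8; apply/eqP => /(mkseq_uniqP _ _ (decomp_uniq dec cc)).
by rewrite !inE nxt_lt /nxt => /(_ i8 isT); lia.
Qed.

Lemma cycle_of_8cycle c : c \in cycles -> is_8cycle (cycle_of vtx c).
Proof.
move=> cc; exists [tuple inord (vtx c i) | i < 8]; split => //.
rewrite cycle_tupleE; apply/mkseq_uniqP => i j i8 j8 /inord_le_inj Eij.
by apply: (mkseq_uniqP _ _ (decomp_uniq dec cc)) => //; apply: Eij; apply: (decomp_vtx_le dec).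
Qed.

Lemma cycle_of_share_edge c d e : c \in cycles -> d \in cycles ->
  e \in cycle_of vtx c -> e \in cycle_of vtx d -> c = d.
Proof.
move=> cc dd /cycle_ofP [i i8 ->] /cycle_ofP [j j8 /eqP].
rewrite vedge_eq ?(decomp_vtx_le dec) ?nxt_lt // => /(sym_owner_same_edge owner).
by rewrite (decomp_owner dec cc i8) (decomp_owner dec dd j8).
Qed.

Lemma mem_packing_of D :
  reflect (exists2 c, c \in cycles & D = cycle_of vtx c) (D \in packing_of vtx cycles).
Proof. by rewrite inE; apply: mapP. Qed.

Lemma packing_of_packing : is_packing (packing_of vtx cycles).
Proof.
split=> [_ /mem_packing_of [c cc ->]|_ _ /mem_packing_of [c cc ->] /mem_packing_of [d dd ->] ncd].
  exact: cycle_of_8cycle.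
rewrite disjoint_subset; apply/subsetP => e ec; rewrite inE /=; apply: contra ncd => ed.
by rewrite (cycle_of_share_edge cc dd ec ed).
Qed.

Lemma leave_not_cycle_edge c i p : c \in cycles -> i < 8 -> p \in L ->
  ~~ same_edge p.1 p.2 (vtx c i) (vtx c (nxt i)).
Proof.
move=> cc i8 pL; have [/andP [lt12 _] not_cycle] := decomp_leave dec pL.
apply: contra not_cycle => /(sym_owner_same_edge owner).
by rewrite (decomp_owner dec cc i8) sym_ownerE ?(ltnW lt12) // => <-.
Qed.

Lemma vedge_covered x y : x < y <= m -> (x, y) \notin L ->
  exists2 D, D \in packing_of vtx cycles & vedge x y \in D.
Proof.
move=> xym xyL; have [oc [i i8 Exy]] := decomp_cover dec xym xyL.
have [/ltnW xy ym] := andP xym.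
exists (cycle_of vtx (owner x y)); first by rewrite inE map_f.
apply/cycle_ofP; exists i => //; apply/eqP.
by rewrite vedge_eq ?(decomp_vtx_le dec) ?nxt_lt ?(leq_trans xy) // same_edge_sym.
Qed.

Lemma cover_packing_of : cover (packing_of vtx cycles) = Kedges m.+1 :\: edge_set L.
Proof.
apply/setP => e; apply/bigcupP/setDP => [[D /mem_packing_of [c cc ED] ec]|[eK eL]].
  rewrite ED in ec; split.
    have [t [ut Et]] := cycle_of_8cycle cc; rewrite Et in ec.
    exact: (subsetP (cycle_edges_sub ut)).
  have [i i8 ->] := cycle_ofP _ _ _ ec; rewrite inE; apply/mapP => [[p pL /eqP]].
  have [/andP [lt12 le2] _] := decomp_leave dec pL.
  rewrite vedge_eq ?(decomp_vtx_le dec) ?nxt_lt ?(leq_trans (ltnW lt12)) //.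
  exact/negP/leave_not_cycle_edge.
move: eK eL; rewrite inE => /cards2P [X [Y [nXY ->]]].
wlog XY : X Y nXY / X < Y => [hyp|].
  case: (ltngtP X Y) => [XY|YX|/val_inj EXY]; first exact: hyp.
    by rewrite setUC; apply: hyp; rewrite // eq_sym.
  by rewrite EXY eqxx in nXY.
have -> : [set X; Y] = vedge X Y by rewrite /vedge !inord_val.
move=> eL; apply: vedge_covered; first by rewrite XY -ltnS ltn_ord.
by apply: contra eL => XYL; rewrite inE; apply/mapP; exists (nat_of_ord X, nat_of_ord Y).
Qed.

Lemma leave_packing_of : leave (packing_of vtx cycles) = edge_set L.
Proof.
rewrite /leave -/(cover _) cover_packing_of setDDr setDv set0U; apply/setIidPr.
apply/subsetP => e; rewrite inE => /mapP [p pL ->].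
have [/andP [lt12 le2] _] := decomp_leave dec pL.
rewrite inE cards2; suff -> : inord p.1 != inord p.2 :> 'I_m.+1 by [].
have le1 : p.1 <= m by exact: leq_trans (ltnW lt12) le2.
by apply/eqP => /(inord_le_inj le1 le2) E12; rewrite E12 ltnn in lt12.
Qed.

Lemma card_edge_set : uniq L -> #|edge_set L| = size L.
Proof.
move=> uL; rewrite cardsE (card_uniqP _) ?size_map // map_inj_in_uniq // => p q pL qL /eqP.
have [/andP [p12 p2] _] := decomp_leave dec pL; have [/andP [q12 q2] _] := decomp_leave dec qL.
rewrite vedge_eq ?(leq_trans (ltnW p12)) ?(leq_trans (ltnW q12)) //.
case: p q {pL qL p2 q2} p12 q12 => [a b] [a' b'] /= ab ab'.
case/orP => /andP [/eqP Ea /eqP Eb]; first by rewrite Ea Eb.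
by move: ab; rewrite Ea Eb => /(ltn_trans ab'); rewrite ltnn.
Qed.

Lemma cycle_of_inj : {in cycles &, injective (cycle_of vtx)}.
Proof.
move=> c d cc dd Ecd; apply: (cycle_of_share_edge cc dd (e := vedge (vtx c 0) (vtx c (nxt 0)))).
  by apply/cycle_ofP; exists 0.
by rewrite -Ecd; apply/cycle_ofP; exists 0.
Qed.

End Decomposed.

Lemma vset_cycle_of vtx c : vset (cycle_of vtx c) = [set x in map inord (mkseq (vtx c) 8)].
Proof.
apply/setP => x; rewrite vset_cycle_edges !in_set /mkseq -map_comp.
by rewrite -[map _ (iota 0 8)]/(mkseq (fun i => inord (vtx c i)) 8) -cycle_tupleE.
Qed.

Section InsideCycles.

Variables (cycles : seq C) (vtx vtx' : C -> nat -> nat) (owner owner' : nat -> nat -> C).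
Variable L : seq (nat * nat).
Hypotheses (dec : edge_decomposition cycles vtx owner L)
           (dec' : edge_decomposition cycles vtx' owner' L).
Hypothesis same_vertices : forall c, c \in cycles -> mkseq (vtx c) 8 =i mkseq (vtx' c) 8.
Hypothesis no_common_edge : forall c i j, c \in cycles -> i < 8 -> j < 8 ->
  ~~ same_edge (vtx c i) (vtx c (nxt i)) (vtx' c j) (vtx' c (nxt j)).

Definition inside_choice (D : {set {set 'I_m.+1}}) :=
  if [seq c <- cycles | cycle_of vtx c == D] is c :: _ then cycle_of vtx' c else D.

Lemma inside_choiceE c : c \in cycles -> inside_choice (cycle_of vtx c) = cycle_of vtx' c.
Proof.
move=> cc; rewrite /inside_choice.
have : c \in [seq d <- cycles | cycle_of vtx d == cycle_of vtx c] by rewrite mem_filter eqxx.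
case Es: [seq d <- _ | _] => [//|d s] _.
have : d \in [seq d <- cycles | cycle_of vtx d == cycle_of vtx c] by rewrite Es mem_head.
by rewrite mem_filter => /andP [/eqP Ecd dd]; rewrite (cycle_of_inj dec dd cc Ecd).
Qed.

Lemma cycle_of_inside c : c \in cycles -> inside_8cycle (cycle_of vtx c) (cycle_of vtx' c).
Proof.
move=> cc; split; first exact: (cycle_of_8cycle dec' cc).
split.
  by rewrite !vset_cycle_of; apply/setP => x; rewrite !in_set (eq_mem_map _ (same_vertices cc)).
rewrite disjoint_subset; apply/subsetP => _ /cycle_ofP [j j8 ->]; rewrite inE.
apply/negP => /cycle_ofP [i i8 /eqP].
rewrite vedge_eq ?(decomp_vtx_le dec) ?(decomp_vtx_le dec') ?nxt_lt //.
exact/negP/no_common_edge.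
Qed.

Lemma packing_of_almost_2perfect : almost_2perfect (packing_of vtx cycles).
Proof.
have image_choice : [set inside_choice D | D in packing_of vtx cycles] = packing_of vtx' cycles.
  apply/setP => D; apply/imsetP/mem_packing_of => [[_ /mem_packing_of [c cc ->] ->]|[c cc ->]].
    by exists c; rewrite ?inside_choiceE.
  by exists (cycle_of vtx c); rewrite ?inside_choiceE // inE map_f.
exists inside_choice; split; [|split].
- by move=> _ /mem_packing_of [c cc ->]; rewrite inside_choiceE //; apply: cycle_of_inside.
- move=> _ _ /mem_packing_of [c cc ->] /mem_packing_of [d dd ->] ncd.
  rewrite !inside_choiceE //; apply: (proj2 (packing_of_packing dec')); rewrite ?inE ?map_f //.
  by apply: contra ncd => /eqP /(cycle_of_inj dec' cc dd) ->.
by rewrite image_choice (leave_packing_of dec) (leave_packing_of dec').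
Qed.

End InsideCycles.

End EdgeDecomposition.

Section Tables.

Variable T : seq (seq nat).

Definition table_vtx (j i : nat) := nth 0 (nth [::] T j) i.

(* Index of the first row of [T] through the edge [xy], or [size T] if none. *)
Definition table_owner (x y : nat) : nat :=
  find (fun s => has (fun i => same_edge x y (nth 0 s i) (nth 0 s (nxt i))) (iota 0 8)) T.

Definition table_ok (m : nat) (L : seq (nat * nat)) : bool :=
  [&& all (fun s => [&& size s == 8, uniq s & all (leq^~ m) s]) T,
      all (fun j => all (fun i =>
        sym_owner table_owner (table_vtx j i) (table_vtx j (nxt i)) == j) (iota 0 8))
        (iota 0 (size T)),
      all (fun y => all (fun x => ((x, y) \in L) || (table_owner x y < size T)) (iota 0 y))
        (iota 0 m.+1) &
      all (fun p => (p.1 < p.2 <= m) && (table_owner p.1 p.2 == size T)) L].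

Lemma table_row m L j : table_ok m L -> j < size T ->
  [/\ mkseq (table_vtx j) 8 = nth [::] T j, uniq (nth [::] T j) & all (leq^~ m) (nth [::] T j)].
Proof.
case/and4P => /allP rows_ok _ _ _ /(mem_nth [::]) /rows_ok /and3P [/eqP size8 uniq_row bounded].
by rewrite -size8 mkseq_nth.
Qed.

Lemma table_decomposition m L :
  table_ok m L -> edge_decomposition m (iota 0 (size T)) table_vtx table_owner L.
Proof.
move=> ok; have row j : j \in iota 0 (size T) -> [/\ mkseq (table_vtx j) 8 = nth [::] T j,
    uniq (nth [::] T j) & all (leq^~ m) (nth [::] T j)] by rewrite mem_iota => /(table_row ok).
case/and4P: ok => _ /allP owner_ok /allP cover_ok /allP leave_ok.
split.
- move=> j i /row [Erow _ /allP le_m] i8; apply: le_m.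
  by rewrite -Erow; apply/mapP; exists i; rewrite ?mem_iota.
- by move=> j /row [-> ? _].
- by move=> j i /owner_ok /allP /(_ i) + i8; rewrite mem_iota i8 => /(_ isT) /eqP.
- move=> x y /andP [xy ym] xyL.
  have := cover_ok y; rewrite mem_iota ltnS ym => /(_ isT) /allP /(_ x).
  rewrite mem_iota xy (negbTE xyL) /= => /(_ isT) owned.
  split; first by rewrite mem_iota.
  move: owned; rewrite -has_find => /(nth_find [::]) /hasP [i]; rewrite mem_iota /= => i8 Exy.
  by exists i.
- move=> p /leave_ok /andP [-> /eqP ->]; split => //.
  by rewrite mem_iota ltnn andbF.
Qed.

End Tables.

Definition tables_paired (T T' : seq (seq nat)) : bool :=
  (size T == size T') && all (fun j => perm_eq (nth [::] T j) (nth [::] T' j) &&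
    all (fun i => all (fun i' => ~~ same_edge (table_vtx T j i) (table_vtx T j (nxt i))
                                           (table_vtx T' j i') (table_vtx T' j (nxt i')))
      (iota 0 8)) (iota 0 8)) (iota 0 (size T)).

Lemma paired_size T T' : tables_paired T T' -> size T' = size T.
Proof. by case/andP => /eqP. Qed.

Section PairedTables.

Variables (T T' : seq (seq nat)) (m : nat) (L L' : seq (nat * nat)).
Hypotheses (ok : table_ok T m L) (ok' : table_ok T' m L') (paired : tables_paired T T').

Lemma paired_same_vertices j : j < size T -> mkseq (table_vtx T j) 8 =i mkseq (table_vtx T' j) 8.
Proof.
case/andP: paired => /eqP size_eq /allP rows_paired jT.
have jT' : j < size T' by rewrite -size_eq.
have [-> _ _] := table_row ok jT; have [-> _ _] := table_row ok' jT'.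
have := rows_paired j; rewrite mem_iota jT => /(_ isT) /andP [perm _].
exact: perm_mem.
Qed.

Lemma paired_no_common_edge j i i' : j < size T -> i < 8 -> i' < 8 ->
  ~~ same_edge (table_vtx T j i) (table_vtx T j (nxt i))
               (table_vtx T' j i') (table_vtx T' j (nxt i')).
Proof.
case/andP: paired => _ /allP rows_paired jT i8 i'8.
have := rows_paired j; rewrite mem_iota jT => /(_ isT) /andP [_ /allP /(_ i)].
rewrite mem_iota i8 => /(_ isT) /allP /(_ i'); rewrite mem_iota i'8.
exact.
Qed.

End PairedTables.

(** * The construction for n = 16k + 5 *)

Inductive cycle_code :=
  | BaseCycle of nat
  | BlockCycle of nat & nat
  | CrossCycle of nat & nat & bool.

Definition code_enc c : nat + nat * nat + nat * nat * bool :=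
  match c with
  | BaseCycle j => inl (inl j)
  | BlockCycle b j => inl (inr (b, j))
  | CrossCycle g h s => inr (g, h, s)
  end.

Definition code_dec (x : nat + nat * nat + nat * nat * bool) :=
  match x with
  | inl (inl j) => BaseCycle j
  | inl (inr (b, j)) => BlockCycle b j
  | inr (g, h, s) => CrossCycle g h s
  end.

Lemma code_encK : cancel code_enc code_dec. Proof. by case. Qed.

HB.instance Definition _ := Equality.copy cycle_code (can_type code_encK).

(* Block 0 is {1..20}, block b > 0 is {16b+5..16b+20}; group g is {4g+1..4g+4}. *)
Definition blk (v : nat) := (v - 5) %/ 16.
Definition group_block (g : nat) := (g - 1) %/ 4.

Lemma blk_group g r : r < 4 -> blk (4 * g + 1 + r) = group_block g.
Proof. by rewrite /blk /group_block; case: g => [|g]; lia. Qed.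

Definition into_block (b u : nat) := if u == 0 then 0 else u + (16 * b + 4).

Lemma into_block_inj b : injective (into_block b).
Proof. by move=> u w; rewrite /into_block; do 2 case: eqP; lia. Qed.

Lemma into_block_le b u : u <= 16 -> into_block b u <= 16 * b + 20.
Proof. by rewrite /into_block; case: eqP; lia. Qed.

Lemma into_block_minn b u w : minn (into_block b u) (into_block b w) = into_block b (minn u w).
Proof. by rewrite /into_block; do 3 case: eqP; lia. Qed.

Lemma into_block_maxn b u w : maxn (into_block b u) (into_block b w) = into_block b (maxn u w).
Proof. by rewrite /into_block; do 3 case: eqP; lia. Qed.

(* With a_r = 4g+1+r and b_t = 4h+1+t, the closed walk
   a_0 b_(2s) a_1 b_(2s+1) a_2 b_(2s+2) a_3 b_(2s+3) (indices mod 4); the two choices of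
   [s] split K_{4,4}, and [cross_side r t] is the one containing a_r b_t. *)
Definition cross_vtx (g h : nat) (s : bool) (i : nat) :=
  if odd i then 4 * h + 1 + (i./2 + 2 * s) %% 4 else 4 * g + 1 + i./2.

Definition cross_side (r t : nat) : bool := 1 < (r + 4 - t) %% 4.

Lemma cross_vtx_le g h s i : g < h -> i < 8 -> cross_vtx g h s i <= 4 * h + 4.
Proof. by move=> gh i8; rewrite /cross_vtx; case: (odd i); lia. Qed.

Lemma cross_uniq g h s : g < h -> uniq (mkseq (cross_vtx g h s) 8).
Proof.
move=> gh; apply/mkseq_uniqP => i j; rewrite !inE => i8 j8.
by rewrite /cross_vtx; do 2 case: ifP; case: s; lia.
Qed.

Lemma mem_cross g h s v :
  (v \in mkseq (cross_vtx g h s) 8) = (4 * g < v <= 4 * g + 4) || (4 * h < v <= 4 * h + 4).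
Proof.
apply/mapP/idP => [[i]|]; first by rewrite mem_iota /cross_vtx => /andP [_ i8] ->; case: ifP; lia.
case/orP=> [vg|vh].
  by exists (2 * (v - 4 * g - 1)); rewrite ?mem_iota /cross_vtx; [lia | case: ifP; lia].
exists (2 * ((v - 4 * h - 1 + 2 * s) %% 4) + 1); rewrite ?mem_iota /cross_vtx; first lia.
by case: ifP; case: s; lia.
Qed.

Lemma cross_cover g h r t : r < 4 -> t < 4 -> exists2 i, i < 8 &
  same_edge (4 * g + 1 + r) (4 * h + 1 + t)
    (cross_vtx g h (cross_side r t) i) (cross_vtx g h (cross_side r t) (nxt i)).
Proof.
move=> r4 t4; exists (if odd (r + t) then (2 * r + 7) %% 8 else 2 * r); first by case: ifP; lia.
rewrite /same_edge /cross_vtx /nxt /cross_side; case: (boolP (odd (r + t))) => par /=;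
  case: (ltnP 1 _) => side; repeat (case: ifP => ?); lia.
Qed.

Definition cross_owner (swap : bool) (x y : nat) : cycle_code :=
  CrossCycle ((x - 1) %/ 4) ((y - 1) %/ 4) (swap (+) cross_side ((x - 1) %% 4) ((y - 1) %% 4)).

Lemma cross_ownerE swap g h r t : r < 4 -> t < 4 ->
  cross_owner swap (4 * g + 1 + r) (4 * h + 1 + t) = CrossCycle g h (swap (+) cross_side r t).
Proof.
by move=> r4 t4; rewrite /cross_owner; congr (CrossCycle _ _ (_ (+) cross_side _ _)); lia.
Qed.

Lemma cross_owner_edge swap g h s i : g < h -> i < 8 ->
  sym_owner (cross_owner swap) (cross_vtx g h s i) (cross_vtx g h s (nxt i)) =
  CrossCycle g h (swap (+) s).
Proof.
move=> gh; case: s; case: i => [|[|[|[|[|[|[|[|i]]]]]]]] // _; rewrite /cross_vtx /nxt /=.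
all: by rewrite ?(sym_ownerC _ (4 * h + 1 + _)) sym_ownerE ?cross_ownerE //; lia.
Qed.

Lemma cross_no_common_edge g h s i j : g < h -> i < 8 -> j < 8 ->
  ~~ same_edge (cross_vtx g h s i) (cross_vtx g h s (nxt i))
               (cross_vtx g h (~~ s) j) (cross_vtx g h (~~ s) (nxt j)).
Proof.
move=> gh i8 j8; apply/negP => /(sym_owner_same_edge (cross_owner false)).
by rewrite !cross_owner_edge //; case: s.
Qed.

Lemma cross_edge_blocks g h s i : group_block g != group_block h -> i < 8 ->
  [/\ 0 < cross_vtx g h s i, 0 < cross_vtx g h s (nxt i)
    & blk (cross_vtx g h s i) != blk (cross_vtx g h s (nxt i))].
Proof. by rewrite /blk /group_block /cross_vtx /nxt => ngh i8; do 2 case: ifP; split; lia. Qed.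

Definition K5_edges : seq (nat * nat) :=
  [seq p <- [seq (x, y) | x <- iota 1 5, y <- iota 1 5] | p.1 < p.2].

Section Codes.

Variables (k n21 n17 : nat).

Definition valid_code (c : cycle_code) : bool :=
  match c with
  | BaseCycle j => j < n21
  | BlockCycle b j => (0 < b < k) && (j < n17)
  | CrossCycle g h _ => [&& g < h, h <= 4 * k & group_block g != group_block h]
  end.

Definition codes : seq cycle_code :=
  [seq c <- [seq BaseCycle j | j <- iota 0 n21]
         ++ [seq BlockCycle b j | b <- iota 0 k, j <- iota 0 n17]
         ++ flatten [seq [:: CrossCycle g h false; CrossCycle g h true]
                       | g <- iota 0 (4 * k).+1, h <- iota 0 (4 * k).+1]
     | valid_code c].

Lemma mem_codes c : (c \in codes) = valid_code c.
Proof.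
rewrite mem_filter andb_idr // 2!mem_cat; case: c => [j|b j|g h s] valid.
- by rewrite map_f ?mem_iota.
- case/andP: valid => /andP [_ bk] jT.
  by rewrite (allpairs_f_dep BlockCycle) ?orbT ?mem_iota.
- case/and3P: valid => gh hk _.
  pose pair_cycles g h := [:: CrossCycle g h false; CrossCycle g h true].
  suff -> : CrossCycle g h s \in flatten [seq pair_cycles g h
                       | g <- iota 0 (4 * k).+1, h <- iota 0 (4 * k).+1] by rewrite !orbT.
  apply/flattenP; exists (pair_cycles g h); last by case: s; rewrite !inE eqxx ?orbT.
  by apply: (allpairs_f_dep pair_cycles); rewrite mem_iota /=; lia.
Qed.

End Codes.

Section Construction.

Variables (k : nat) (T21 T17 : seq (seq nat)) (swap : bool).
Local Notation cycles := (codes k (size T21) (size T17)).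

Hypotheses (k_gt0 : 0 < k) (ok21 : table_ok T21 20 K5_edges) (ok17 : table_ok T17 16 [::]).

Let dec21 := table_decomposition ok21.
Let dec17 := table_decomposition ok17.

Definition code_vtx (c : cycle_code) (i : nat) : nat :=
  match c with
  | BaseCycle j => table_vtx T21 j i
  | BlockCycle b j => into_block b (table_vtx T17 j i)
  | CrossCycle g h s => cross_vtx g h (swap (+) s) i
  end.

(* [v - (16 * b + 4)] also sends [0] to [0], by truncated subtraction. *)
Definition code_owner (x y : nat) : cycle_code :=
  if (x == 0) || (blk x == blk y) then
    if blk y == 0 then BaseCycle (table_owner T21 x y)
    else BlockCycle (blk y) (table_owner T17 (x - (16 * blk y + 4)) (y - (16 * blk y + 4)))
  else cross_owner swap x y.

Lemma code_owner_base x y : x < y <= 20 -> code_owner x y = BaseCycle (table_owner T21 x y).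
Proof.
move=> xy; have blk0 v : v <= 20 -> blk v = 0 by rewrite /blk; lia.
by rewrite /code_owner !blk0 ?eqxx ?orbT //; lia.
Qed.

Lemma code_owner_block b u w : 0 < b -> u < w <= 16 ->
  code_owner (into_block b u) (into_block b w) = BlockCycle b (table_owner T17 u w).
Proof.
move=> b_gt0 uw.
have into_block_w : into_block b w = w + (16 * b + 4) by rewrite /into_block; case: eqP; lia.
have blk_w : blk (into_block b w) = b by rewrite into_block_w /blk; lia.
rewrite /code_owner blk_w (_ : (b == 0) = false); last by apply/eqP; lia.
rewrite (_ : (into_block b u == 0) || (blk (into_block b u) == b)); last first.
  case: u uw => [|u] uw; first by rewrite /into_block eqxx.
  by apply/orP; right; apply/eqP; rewrite /blk /into_block /=; lia.
by congr (BlockCycle b (table_owner T17 _ _)); rewrite /into_block; case: eqP; lia.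
Qed.

Lemma code_owner_cross g h r t : group_block g != group_block h -> r < 4 -> t < 4 ->
  code_owner (4 * g + 1 + r) (4 * h + 1 + t) = CrossCycle g h (swap (+) cross_side r t).
Proof.
move=> ngh r4 t4; rewrite /code_owner ifF ?cross_ownerE //.
by rewrite !blk_group // (negbTE ngh) orbF addn_eq0 addn1.
Qed.

Lemma sym_owner_code_cross a b : 0 < a -> 0 < b -> blk a != blk b ->
  sym_owner code_owner a b = sym_owner (cross_owner swap) a b.
Proof.
wlog ab : a b / a <= b => [hyp a0 b0 nab|].
  case: (leqP a b) => [ab|/ltnW ba]; first exact: hyp.
  by rewrite sym_ownerC hyp 1?eq_sym // sym_ownerC.
by move=> a0 b0 nab; rewrite !sym_ownerE // /code_owner eqn0Ngt a0 (negbTE nab).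
Qed.

Lemma code_vtx_le c i : c \in cycles -> i < 8 -> code_vtx c i <= 16 * k + 4.
Proof.
rewrite mem_codes; case: c => [j|b j|g h s] /= valid i8.
- by have := decomp_vtx_le dec21 (_ : j \in iota 0 _) i8; rewrite mem_iota => /(_ valid); lia.
- case/andP: valid => /andP [_ bk] jT.
  have := decomp_vtx_le dec17 (_ : j \in iota 0 _) i8.
  by rewrite mem_iota => /(_ jT) /(into_block_le b); lia.
- by case/and3P: valid => gh hk _; have := cross_vtx_le (swap (+) s) gh i8; lia.
Qed.

Lemma base_vtx j i : code_vtx (BaseCycle j) i = table_vtx T21 j i.
Proof. by []. Qed.

Lemma block_vtx b j i : code_vtx (BlockCycle b j) i = into_block b (table_vtx T17 j i).
Proof. by []. Qed.

Lemma mkseq_block_vtx b j :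
  mkseq (code_vtx (BlockCycle b j)) 8 = map (into_block b) (mkseq (table_vtx T17 j) 8).
Proof. by rewrite /mkseq -map_comp. Qed.

Lemma code_uniq c : c \in cycles -> uniq (mkseq (code_vtx c) 8).
Proof.
rewrite mem_codes; case: c => [j|b j|g h s] valid.
- by apply: (decomp_uniq dec21); rewrite mem_iota.
- case/andP: valid => _ jT.
  rewrite mkseq_block_vtx map_inj_uniq; last exact: into_block_inj.
  by apply: (decomp_uniq dec17); rewrite mem_iota.
- by case/and3P: valid => gh _ _; apply: cross_uniq.
Qed.

Lemma code_owner_edge c i : c \in cycles -> i < 8 ->
  sym_owner code_owner (code_vtx c i) (code_vtx c (nxt i)) = c.
Proof.
rewrite mem_codes; case: c => [j|b j|g h s] /= valid i8.
- have jT : j \in iota 0 (size T21) by rewrite mem_iota.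
  have := decomp_step_neq dec21 jT i8; have := decomp_vtx_le dec21 jT i8.
  have := decomp_vtx_le dec21 jT (nxt_lt i) => le2 le1 neq.
  rewrite {1}/sym_owner code_owner_base; last by lia.
  by rewrite -/(sym_owner _ _ _) (decomp_owner dec21 jT i8).
- case/andP: valid => /andP [b_gt0 _] jT'.
  have jT : j \in iota 0 (size T17) by rewrite mem_iota.
  have := decomp_step_neq dec17 jT i8; have := decomp_vtx_le dec17 jT i8.
  have := decomp_vtx_le dec17 jT (nxt_lt i) => le2 le1 neq.
  rewrite {1}/sym_owner into_block_minn into_block_maxn code_owner_block //; last by lia.
  by rewrite -/(sym_owner _ _ _) (decomp_owner dec17 jT i8).
- case/and3P: valid => gh _ ngh; have [a0 b0 nab] := cross_edge_blocks (swap (+) s) ngh i8.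
  by rewrite sym_owner_code_cross // cross_owner_edge // addKb.
Qed.

Definition code_covers (x y : nat) :=
  code_owner x y \in cycles /\ exists2 i, i < 8 &
    same_edge x y (code_vtx (code_owner x y) i) (code_vtx (code_owner x y) (nxt i)).

Lemma cover_base x y : x < y <= 20 -> (x, y) \notin K5_edges -> code_covers x y.
Proof.
move=> xy xyL; rewrite /code_covers code_owner_base // mem_codes /=.
by have [+ cyc] := decomp_cover dec21 xy xyL; rewrite mem_iota.
Qed.

Lemma cover_block b u w : 0 < b < k -> u < w <= 16 -> code_covers (into_block b u) (into_block b w).
Proof.
move=> /andP [b_gt0 bk] uw; rewrite /code_covers code_owner_block // mem_codes /= b_gt0 bk.
have [+ [i i8 Euw]] := decomp_cover dec17 uw (negbT (in_nil _)); rewrite mem_iota => -> /=.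
by split => //; exists i; rewrite // same_edge_inj //; apply: into_block_inj.
Qed.

Lemma cover_cross g h r t : g < h <= 4 * k -> group_block g != group_block h -> r < 4 -> t < 4 ->
  code_covers (4 * g + 1 + r) (4 * h + 1 + t).
Proof.
move=> /andP [gh hk] ngh r4 t4; rewrite /code_covers code_owner_cross // mem_codes /= gh hk ngh.
by split => //=; rewrite addKb; apply: cross_cover.
Qed.

Lemma code_cover x y : x < y <= 16 * k + 4 -> (x, y) \notin K5_edges -> code_covers x y.
Proof.
move=> /andP [xy ym] xyL; case: (boolP ((x == 0) || (blk x == blk y))) => [same_block|].
  have [y20|y21] := leqP y 20; first by apply: cover_base; rewrite ?xy.
  move Eb: (blk y) same_block => b same_block.
  have [b_gt0 bk] : 0 < b /\ b < k by move: Eb; rewrite /blk; lia.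
  have [u [w [-> -> uw]]] : exists u w, [/\ x = into_block b u, y = into_block b w & u < w <= 16].
    exists (x - (16 * b + 4)), (y - (16 * b + 4)).
    move: same_block Eb; rewrite /into_block /blk => /orP [/eqP ?|/eqP ?] ?;
      by split; try case: eqP => ?; lia.
  by apply: cover_block; rewrite ?b_gt0.
rewrite negb_or => /andP [x_gt0 blk_xy].
have [g [h [r [t [-> -> [gh hk ngh r4 t4]]]]]] : exists g h r t,
    [/\ x = 4 * g + 1 + r, y = 4 * h + 1 + t &
     [/\ g < h, h <= 4 * k, group_block g != group_block h, r < 4 & t < 4]].
  exists ((x - 1) %/ 4), ((y - 1) %/ 4), ((x - 1) %% 4), ((y - 1) %% 4).
  move: x_gt0 blk_xy; rewrite /blk /group_block => x_gt0 blk_xy.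
  by split; [lia | lia | split; lia].
by apply: cover_cross; rewrite ?gh.
Qed.

Lemma code_leave p : p \in K5_edges -> p.1 < p.2 <= 16 * k + 4 /\ code_owner p.1 p.2 \notin cycles.
Proof.
move=> pL; have [/andP [lt12 le20] notin] := decomp_leave dec21 pL.
split; first by rewrite lt12; lia.
by rewrite code_owner_base ?lt12 // mem_codes /=; move: notin; rewrite mem_iota.
Qed.

Lemma code_decomposition : edge_decomposition (16 * k + 4) cycles code_vtx code_owner K5_edges.
Proof.
split; [exact: code_vtx_le | exact: code_uniq | exact: code_owner_edge | | exact: code_leave].
exact: code_cover.
Qed.

End Construction.

(* Rows of P21 and P17: 8-cycles decomposing K_21 - K_5 and K_17; row j of Q21 (Q17) is an
   inside cycle of row j of P21 (P17). *)
Definition P21 : seq (seq nat) :=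
  [:: [:: 16; 7; 12; 5; 0; 10; 8; 20];
     [:: 17; 8; 13; 1; 0; 6; 9; 16];
     [:: 18; 9; 14; 2; 0; 7; 10; 17];
     [:: 19; 10; 15; 3; 0; 8; 6; 18];
     [:: 20; 6; 11; 4; 0; 9; 7; 19];
     [:: 9; 15; 18; 3; 11; 5; 16; 2];
     [:: 10; 11; 19; 4; 12; 1; 17; 3];
     [:: 6; 12; 20; 5; 13; 2; 18; 4];
     [:: 7; 13; 16; 1; 14; 3; 19; 5];
     [:: 8; 14; 17; 2; 15; 4; 20; 1];
     [:: 17; 11; 15; 7; 3; 12; 10; 20];
     [:: 18; 12; 11; 8; 4; 13; 6; 16];
     [:: 19; 13; 12; 9; 5; 14; 7; 17];
     [:: 20; 14; 13; 10; 1; 15; 8; 18];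
     [:: 16; 15; 14; 6; 2; 11; 9; 19];
     [:: 5; 8; 16; 0; 15; 13; 17; 6];
     [:: 1; 9; 17; 0; 11; 14; 18; 7];
     [:: 2; 10; 18; 0; 12; 15; 19; 8];
     [:: 3; 6; 19; 0; 13; 11; 20; 9];
     [:: 4; 7; 20; 0; 14; 12; 16; 10];
     [:: 11; 1; 19; 12; 8; 9; 4; 16];
     [:: 12; 2; 20; 13; 9; 10; 5; 17];
     [:: 13; 3; 16; 14; 10; 6; 1; 18];
     [:: 14; 4; 17; 15; 6; 7; 2; 19];
     [:: 15; 5; 18; 11; 7; 8; 3; 20]].
Definition Q21 : seq (seq nat) :=
  [:: [:: 16; 10; 5; 8; 7; 0; 20; 12];
     [:: 17; 6; 1; 9; 8; 0; 16; 13];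
     [:: 18; 7; 2; 10; 9; 0; 17; 14];
     [:: 19; 8; 3; 6; 10; 0; 18; 15];
     [:: 20; 9; 4; 7; 6; 0; 19; 11];
     [:: 9; 3; 15; 16; 11; 2; 18; 5];
     [:: 10; 4; 11; 17; 12; 3; 19; 1];
     [:: 6; 5; 12; 18; 13; 4; 20; 2];
     [:: 7; 1; 13; 19; 14; 5; 16; 3];
     [:: 8; 2; 14; 20; 15; 1; 17; 4];
     [:: 17; 3; 20; 7; 10; 11; 12; 15];
     [:: 18; 4; 16; 8; 6; 12; 13; 11];
     [:: 19; 5; 17; 9; 7; 13; 14; 12];
     [:: 20; 1; 18; 10; 8; 14; 15; 13];
     [:: 16; 2; 19; 6; 9; 15; 11; 14];
     [:: 5; 0; 13; 8; 17; 16; 6; 15];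
     [:: 1; 0; 14; 9; 18; 17; 7; 11];
     [:: 2; 0; 15; 10; 19; 18; 8; 12];
     [:: 3; 0; 11; 6; 20; 19; 9; 13];
     [:: 4; 0; 12; 7; 16; 20; 10; 14];
     [:: 11; 8; 1; 12; 4; 19; 16; 9];
     [:: 12; 9; 2; 13; 5; 20; 17; 10];
     [:: 13; 10; 3; 14; 1; 16; 18; 6];
     [:: 14; 6; 4; 15; 2; 17; 19; 7];
     [:: 15; 7; 5; 11; 3; 18; 20; 8]].
Definition P17 : seq (seq nat) :=
  [:: [:: 8; 0; 10; 9; 13; 11; 14; 2];
     [:: 9; 1; 11; 10; 14; 12; 15; 3];
     [:: 10; 2; 12; 11; 15; 13; 16; 4];
     [:: 11; 3; 13; 12; 16; 14; 0; 5];
     [:: 12; 4; 14; 13; 0; 15; 1; 6];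
     [:: 13; 5; 15; 14; 1; 16; 2; 7];
     [:: 14; 6; 16; 15; 2; 0; 3; 8];
     [:: 15; 7; 0; 16; 3; 1; 4; 9];
     [:: 16; 8; 1; 0; 4; 2; 5; 10];
     [:: 0; 9; 2; 1; 5; 3; 6; 11];
     [:: 1; 10; 3; 2; 6; 4; 7; 12];
     [:: 2; 11; 4; 3; 7; 5; 8; 13];
     [:: 3; 12; 5; 4; 8; 6; 9; 14];
     [:: 4; 13; 6; 5; 9; 7; 10; 15];
     [:: 5; 14; 7; 6; 10; 8; 11; 16];
     [:: 6; 15; 8; 7; 11; 9; 12; 0];
     [:: 7; 16; 9; 8; 12; 10; 13; 1]].
Definition Q17 : seq (seq nat) :=
  [:: [:: 8; 10; 2; 9; 14; 13; 0; 11];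
     [:: 9; 11; 3; 10; 15; 14; 1; 12];
     [:: 10; 12; 4; 11; 16; 15; 2; 13];
     [:: 11; 13; 5; 12; 0; 16; 3; 14];
     [:: 12; 14; 6; 13; 1; 0; 4; 15];
     [:: 13; 15; 7; 14; 2; 1; 5; 16];
     [:: 14; 16; 8; 15; 3; 2; 6; 0];
     [:: 15; 0; 9; 16; 4; 3; 7; 1];
     [:: 16; 1; 10; 0; 5; 4; 8; 2];
     [:: 0; 2; 11; 1; 6; 5; 9; 3];
     [:: 1; 3; 12; 2; 7; 6; 10; 4];
     [:: 2; 4; 13; 3; 8; 7; 11; 5];
     [:: 3; 5; 14; 4; 9; 8; 12; 6];
     [:: 4; 6; 15; 5; 10; 9; 13; 7];
     [:: 5; 7; 16; 6; 11; 10; 14; 8];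
     [:: 6; 8; 0; 7; 12; 11; 15; 9];
     [:: 7; 9; 1; 8; 13; 12; 16; 10]].

Lemma P21_ok : table_ok P21 20 K5_edges. Proof. by vm_compute. Qed.
Lemma Q21_ok : table_ok Q21 20 K5_edges. Proof. by vm_compute. Qed.
Lemma P17_ok : table_ok P17 16 [::]. Proof. by vm_compute. Qed.
Lemma Q17_ok : table_ok Q17 16 [::]. Proof. by vm_compute. Qed.
Lemma P21_Q21_paired : tables_paired P21 Q21. Proof. by vm_compute. Qed.
Lemma P17_Q17_paired : tables_paired P17 Q17. Proof. by vm_compute. Qed.

Lemma paired_same_vertices_codes k c : c \in codes k (size P21) (size P17) ->
  mkseq (code_vtx P21 P17 false c) 8 =i mkseq (code_vtx Q21 Q17 true c) 8.
Proof.
rewrite mem_codes; case: c => [j|b j|g h s] valid.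
- exact: (paired_same_vertices P21_ok Q21_ok P21_Q21_paired (j := j) valid).
- case/andP: valid => _ jT; rewrite !mkseq_block_vtx.
  exact/eq_mem_map/(paired_same_vertices P17_ok Q17_ok P17_Q17_paired (j := j) jT).
- by move=> v; rewrite !mem_cross.
Qed.

Lemma paired_no_common_edge_codes k c i j : c \in codes k (size P21) (size P17) -> i < 8 -> j < 8 ->
  ~~ same_edge (code_vtx P21 P17 false c i) (code_vtx P21 P17 false c (nxt i))
               (code_vtx Q21 Q17 true c j) (code_vtx Q21 Q17 true c (nxt j)).
Proof.
rewrite mem_codes; case: c => [jj|b jj|g h s] valid i8 j8.
- rewrite !base_vtx; exact: (paired_no_common_edge P21_Q21_paired (valid : jj < size P21) i8 j8).
- case/andP: valid => _ jT; rewrite !block_vtx same_edge_inj; last exact: into_block_inj.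
  exact: (paired_no_common_edge P17_Q17_paired jT i8 j8).
- by case/and3P: valid => gh _ _; apply: cross_no_common_edge.
Qed.

Lemma binomial_mod8 k : 'C(16 * k + 5, 2) %% 8 = 2.
Proof.
rewrite bin2 (_ : (16 * k + 5) * (16 * k + 5).-1 = ((16 * k + 5) * (8 * k + 2)).*2); last first.
  by rewrite -mul2n; nia.
rewrite doubleK; nia.
Qed.

Theorem lemma3p3 (n : nat) :
  n %% 16 = 5 -> 21 <= n ->
  exists P : {set {set {set 'I_n}}},
    is_packing P /\ is_maximum P /\ almost_2perfect P.
Proof.
move=> n_mod n_ge21.
have [k -> k_gt0] : exists2 k, n = (16 * k + 4).+1 & 0 < k.
  by exists (n %/ 16); [rewrite {1}(divn_eq n 16) n_mod; lia | lia].
have decP := code_decomposition false k_gt0 P21_ok P17_ok.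
have decQ := code_decomposition true k_gt0 Q21_ok Q17_ok.
rewrite (paired_size P21_Q21_paired) (paired_size P17_Q17_paired) in decQ.
exists (packing_of _ (code_vtx P21 P17 false) (codes k (size P21) (size P17))).
have packed := packing_of_packing decP.
split; [done | split; [split => // P' packed'|]].
  rewrite (leave_packing_of decP) (card_edge_set decP) //; apply: leave_card_ge10 packed' _ _.
    by rewrite oddS oddD oddM.
  by rewrite -addn1 -addnA binomial_mod8.
apply: packing_of_almost_2perfect decP decQ _ _.
  exact: paired_same_vertices_codes.
exact: paired_no_common_edge_codes.
Qed.
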